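(* (1) For all $(x,v)\in\mathbb R^3_0\times\mathbb R^3$, $\nabla_xV(x,v)\cdot v + \nabla_vV(x,v)\cdot(-\mu x/|x|^3)=0$, where $\nabla_x V= k_1 v\times\Delta L + k_2\big(v\times(\Delta A\times v)-\tfrac{\mu}{|x|}\Delta A+\tfrac{\mu}{|x|^3}xx^T\Delta A\big)$ and $\nabla_v V = k_1\Delta L\times x + k_2\big((x\times v)\times\Delta A + x\times(v\times\Delta A)\big)$, with $\Delta L=L(x,v)-L_0$, $\Delta A=A(x,v)-A_0$. (2) For any $c$ with $0<c<\min\{k_1|L_0|^2/2,\ k_2(\mu-|A_0|)^2/2\}$, the set $V^{-1}([0,c])$ is a compact subset of $\mathbb R^3_0\times\mathbb R^3$.
   Context: $\mathbb R^3_0=\mathbb R^3\setminus\{0\}$, $\mu>0$. $L(x,v)=x\times v$ (angular momentum) and $A(x,v)=v\times(x\times v)-\mu x/|x|$ (Laplace–Runge–Lenz vector). Fix $L_0,A_0\in\mathbb R^3$ with $L_0\perp A_0$, $L_0\ne0$, $|A_0|<\mu$. With $k_1,k_2>0$, $V(x,v)=\tfrac{k_1}{2}|L(x,v)-L_0|^2+\tfrac{k_2}{2}|A(x,v)-A_0|^2$ on $\mathbb R^3_0\times\mathbb R^3$. *)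

From Stdlib Require Import Reals Lra List.
Open Scope R_scope.

Record vec3 := mk3 { c1 : R; c2 : R; c3 : R }.

Definition vadd (a b : vec3) : vec3 := mk3 (c1 a + c1 b) (c2 a + c2 b) (c3 a + c3 b).
Definition vscale (s : R) (a : vec3) : vec3 := mk3 (s * c1 a) (s * c2 a) (s * c3 a).
Definition vopp (a : vec3) : vec3 := vscale (-1) a.
Definition vsub (a b : vec3) : vec3 := vadd a (vopp b).
Definition vzero : vec3 := mk3 0 0 0.
Definition dot (a b : vec3) : R := c1 a * c1 b + c2 a * c2 b + c3 a * c3 b.
Definition cross (a b : vec3) : vec3 :=
  mk3 (c2 a * c3 b - c3 a * c2 b)
      (c3 a * c1 b - c1 a * c3 b)
      (c1 a * c2 b - c2 a * c1 b).
Definition vnorm (a : vec3) : R := sqrt (dot a a).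

Definition Lvec (x v : vec3) : vec3 := cross x v.
Definition Avec (mu : R) (x v : vec3) : vec3 :=
  vsub (cross v (cross x v)) (vscale (mu / vnorm x) x).

Definition Vfun (mu k1 k2 : R) (L0 A0 : vec3) (x v : vec3) : R :=
  k1 / 2 * (vnorm (vsub (Lvec x v) L0)) ^ 2
  + k2 / 2 * (vnorm (vsub (Avec mu x v) A0)) ^ 2.

(* The claimed gradients (x x^T dA written as x (x . dA)) *)
Definition gradx_V (mu k1 k2 : R) (L0 A0 : vec3) (x v : vec3) : vec3 :=
  let dL := vsub (Lvec x v) L0 in
  let dA := vsub (Avec mu x v) A0 in
  vadd (vscale k1 (cross v dL))
       (vscale k2 (vadd (vadd (cross v (cross dA v)) (vscale (- (mu / vnorm x)) dA))
                        (vscale (mu / (vnorm x ^ 3) * dot x dA) x))).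

Definition gradv_V (mu k1 k2 : R) (L0 A0 : vec3) (x v : vec3) : vec3 :=
  let dL := vsub (Lvec x v) L0 in
  let dA := vsub (Avec mu x v) A0 in
  vadd (vscale k1 (cross dL x))
       (vscale k2 (vadd (cross (cross x v) dA) (cross x (cross v dA)))).

Definition pdist (p q : vec3 * vec3) : R :=
  sqrt (dot (vsub (fst p) (fst q)) (vsub (fst p) (fst q))
        + dot (vsub (snd p) (snd q)) (vsub (snd p) (snd q))).

Definition open6 (U : vec3 * vec3 -> Prop) : Prop :=
  forall p, U p -> exists eps, 0 < eps /\ forall q, pdist p q < eps -> U q.

Definition compact6 (S : vec3 * vec3 -> Prop) : Prop :=
  forall (I : Type) (U : I -> vec3 * vec3 -> Prop),
    (forall i, open6 (U i)) ->
    (forall p, S p -> exists i, U i p) ->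
    exists l : list I, forall p, S p -> exists i, In i l /\ U i p.

(* V is assembled from the angular momentum L and the Laplace-Runge-Lenz vector A, both
   first integrals of the Kepler field (x' = v, v' = -mu x / |x|^3); once the directional
   derivatives of V are computed by product rules for [cross] and [dot], the identity in (1)
   is the algebraic trace of this, using only mu / |x|^3 * |x|^2 = mu / |x|.

   For (2), on {V <= c} the bound on c gives |L - L0| < |L0| and |A - A0| < mu - |A0|, so |L|
   is bounded away from 0 and |A| stays below mu. The Kepler identities
   x . A = |L|^2 - mu |x| and v x L = A + mu x / |x| then confine |x| to a compact
   subinterval of (0, +oo) and bound |v|. The sublevel set is therefore bounded and, V being
   continuous away from x = 0, closed in R^6; Heine-Borel is obtained from the gauge
   compactness of boxes through a Lebesgue number and a finite grid. *)

From Pilot Require Import Defs.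
From Stdlib Require Import Reals Lra List Classical ClassicalEpsilon.
From Coquelicot Require Import Coquelicot.
Open Scope R_scope.

(** * Vector algebra *)

Lemma dot_self_ge0 a : 0 <= dot a a.
Proof. unfold dot; nra. Qed.

Lemma dot_self_gt0 x : x <> vzero -> 0 < dot x x.
Proof.
  destruct x as [a b c]; unfold dot; simpl; intro Hx.
  destruct (Req_dec a 0), (Req_dec b 0), (Req_dec c 0);
    try (subst; exfalso; apply Hx; reflexivity); nra.
Qed.

Lemma vnorm_ge0 a : 0 <= vnorm a.
Proof. apply sqrt_pos. Qed.

Lemma vnorm_gt0 x : x <> vzero -> 0 < vnorm x.
Proof. intro Hx; apply sqrt_lt_R0, dot_self_gt0, Hx. Qed.

Lemma vnorm_sq a : vnorm a ^ 2 = dot a a.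
Proof. apply pow2_sqrt, dot_self_ge0. Qed.

Lemma vsub_vzero a : vsub a vzero = a.
Proof. destruct a; unfold vsub, vadd, vopp, vscale, vzero; simpl; f_equal; ring. Qed.

Lemma line_at_0 x w : vadd x (vscale 0 w) = x.
Proof. destruct x, w; unfold vadd, vscale; simpl; f_equal; ring. Qed.

Lemma vnorm_vzero : vnorm vzero = 0.
Proof. unfold vnorm, dot, vzero; simpl; rewrite Rmult_0_l, !Rplus_0_l; apply sqrt_0. Qed.

Lemma lagrange_identity a b :
  dot a a * dot b b - dot a b ^ 2 = dot (cross a b) (cross a b).
Proof. destruct a, b; unfold dot, cross; simpl; ring. Qed.

Lemma le_of_sq_le a b : a ^ 2 <= b ^ 2 -> 0 <= b -> a <= b.
Proof. intros; apply Rsqr_incr_0_var; unfold Rsqr; lra. Qed.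

Lemma dot_le_vnorm a b : dot a b <= vnorm a * vnorm b.
Proof.
  apply le_of_sq_le; [|apply Rmult_le_pos; apply vnorm_ge0].
  rewrite Rpow_mult_distr, !vnorm_sq.
  pose proof (lagrange_identity a b); pose proof (dot_self_ge0 (cross a b)); lra.
Qed.

Lemma vnorm_opp a : vnorm (vopp a) = vnorm a.
Proof. unfold vnorm; f_equal; destruct a; unfold dot, vopp, vscale; simpl; ring. Qed.

Lemma dot_ge_opp_vnorm a b : - (vnorm a * vnorm b) <= dot a b.
Proof.
  rewrite <- (vnorm_opp a).
  replace (dot a b) with (- dot (vopp a) b)
    by (destruct a, b; unfold dot, vopp, vscale; simpl; ring).
  pose proof (dot_le_vnorm (vopp a) b); lra.
Qed.

Lemma vnorm_add_le a b : vnorm (vadd a b) <= vnorm a + vnorm b.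
Proof.
  pose proof (vnorm_ge0 a); pose proof (vnorm_ge0 b); pose proof (dot_le_vnorm a b).
  apply le_of_sq_le; [|lra].
  rewrite vnorm_sq.
  replace (dot (vadd a b) (vadd a b)) with (dot a a + 2 * dot a b + dot b b)
    by (destruct a, b; unfold dot, vadd; simpl; ring).
  rewrite <- !vnorm_sq; nra.
Qed.

Lemma vnorm_le_add_sub a b : vnorm a <= vnorm b + vnorm (vsub a b).
Proof.
  replace a with (vadd b (vsub a b)) at 1
    by (destruct a, b; unfold vsub, vadd, vopp, vscale; simpl; f_equal; ring).
  apply vnorm_add_le.
Qed.

Lemma vnorm_subC a b : vnorm (vsub a b) = vnorm (vsub b a).
Proof. unfold vnorm; f_equal; destruct a, b; unfold dot, vsub, vadd, vopp, vscale; simpl; ring. Qed.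

Lemma vnorm_scale s a : vnorm (vscale s a) = Rabs s * vnorm a.
Proof.
  unfold vnorm; rewrite <- sqrt_Rsqr_abs, <- sqrt_mult by (apply Rle_0_sqr || apply dot_self_ge0).
  f_equal; destruct a; unfold dot, vscale, Rsqr; simpl; ring.
Qed.

Lemma vnorm_cross_orth a b : dot a b = 0 -> vnorm (cross a b) = vnorm a * vnorm b.
Proof.
  intros Hab; unfold vnorm; rewrite <- sqrt_mult by apply dot_self_ge0.
  f_equal; rewrite <- lagrange_identity, Hab; ring.
Qed.

Lemma abs_coord_sub_le_vnorm a b :
  Rabs (Defs.c1 a - Defs.c1 b) <= vnorm (vsub a b) /\
  Rabs (Defs.c2 a - Defs.c2 b) <= vnorm (vsub a b) /\
  Rabs (Defs.c3 a - Defs.c3 b) <= vnorm (vsub a b).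
Proof.
  destruct a as [a1 a2 a3], b as [b1 b2 b3]; unfold vnorm, dot, vsub, vadd, vopp, vscale; simpl.
  pose proof (Rle_0_sqr (a1 - b1)); pose proof (Rle_0_sqr (a2 - b2));
    pose proof (Rle_0_sqr (a3 - b3)); unfold Rsqr in *.
  repeat split; rewrite <- sqrt_Rsqr_abs; apply sqrt_le_1_alt; unfold Rsqr;
    replace (a1 + -1 * b1) with (a1 - b1) by ring; replace (a2 + -1 * b2) with (a2 - b2) by ring;
    replace (a3 + -1 * b3) with (a3 - b3) by ring; lra.
Qed.

Lemma Vfun_dot mu k1 k2 L0 A0 x v : Vfun mu k1 k2 L0 A0 x v =
  k1 / 2 * dot (vsub (Lvec x v) L0) (vsub (Lvec x v) L0)
  + k2 / 2 * dot (vsub (Avec mu x v) A0) (vsub (Avec mu x v) A0).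
Proof. unfold Vfun; rewrite !vnorm_sq; reflexivity. Qed.

Lemma Vfun_ge0 mu k1 k2 L0 A0 x v : 0 < k1 -> 0 < k2 -> 0 <= Vfun mu k1 k2 L0 A0 x v.
Proof.
  intros; unfold Vfun.
  pose proof (pow2_ge_0 (vnorm (vsub (Lvec x v) L0)));
    pose proof (pow2_ge_0 (vnorm (vsub (Avec mu x v) A0))); nra.
Qed.

(** * Directional derivatives of V *)

Definition is_vderive (F : R -> vec3) (t : R) (D : vec3) :=
  is_derive (fun s => Defs.c1 (F s)) t (Defs.c1 D) /\
  is_derive (fun s => Defs.c2 (F s)) t (Defs.c2 D) /\
  is_derive (fun s => Defs.c3 (F s)) t (Defs.c3 D).

(* Coquelicot's rules restated on [R -> R]: in their generic form [apply] gets lost in the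
   normed-module coercions. *)
Lemma is_derive_const_R (a x : R) : is_derive (fun _ : R => a) x 0.
Proof. apply (@is_derive_const R_AbsRing R_NormedModule). Qed.

Lemma is_derive_id_R (x : R) : is_derive (fun t : R => t) x 1.
Proof. apply (@is_derive_id R_AbsRing). Qed.

Lemma is_derive_plus_R (f g : R -> R) (x df dg : R) : is_derive f x df -> is_derive g x dg ->
  is_derive (fun t => f t + g t) x (df + dg).
Proof. intros; apply (is_derive_plus f g); auto. Qed.

Lemma is_derive_minus_R (f g : R -> R) (x df dg : R) : is_derive f x df -> is_derive g x dg ->
  is_derive (fun t => f t - g t) x (df - dg).
Proof. intros; apply (is_derive_minus f g); auto. Qed.

Lemma is_derive_mult_R (f g : R -> R) (x df dg : R) : is_derive f x df -> is_derive g x dg ->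
  is_derive (fun t => f t * g t) x (df * g x + f x * dg).
Proof. intros; apply (is_derive_mult f g); auto. intros; apply Rmult_comm. Qed.

Ltac derive_step := match goal with
| |- is_derive (fun _ => ?a) _ _ => apply is_derive_const_R
| |- is_derive (fun t => t) _ _ => apply is_derive_id_R
| |- is_derive (fun t => @?f t + @?g t) _ _ => apply is_derive_plus_R
| |- is_derive (fun t => @?f t - @?g t) _ _ => apply is_derive_minus_R
| |- is_derive (fun t => @?f t * @?g t) _ _ => apply is_derive_mult_R
| |- is_derive _ _ _ => eassumption
end.

Lemma is_derive_eq (f : R -> R) (x l l' : R) : is_derive f x l -> l = l' -> is_derive f x l'.
Proof. now intros H <-. Qed.

Ltac derive_vectors :=
  intros; unfold is_vderive in *;
  repeat match goal with H : _ /\ _ |- _ => destruct H end;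
  split; [|split]; simpl; (eapply is_derive_eq; [repeat derive_step | simpl; ring]).

Lemma is_vderive_const a t : is_vderive (fun _ => a) t vzero.
Proof. derive_vectors. Qed.

Lemma is_vderive_line x w t : is_vderive (fun s => vadd x (vscale s w)) t w.
Proof. derive_vectors. Qed.

Lemma is_vderive_sub F G t DF DG : is_vderive F t DF -> is_vderive G t DG ->
  is_vderive (fun s => vsub (F s) (G s)) t (vsub DF DG).
Proof. derive_vectors. Qed.

Lemma is_vderive_scale f F t df DF : is_derive f t df -> is_vderive F t DF ->
  is_vderive (fun s => vscale (f s) (F s)) t (vadd (vscale df (F t)) (vscale (f t) DF)).
Proof. derive_vectors. Qed.

Lemma is_vderive_cross F G t DF DG : is_vderive F t DF -> is_vderive G t DG ->
  is_vderive (fun s => cross (F s) (G s)) t (vadd (cross DF (G t)) (cross (F t) DG)).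
Proof. derive_vectors. Qed.

Lemma is_derive_half_sq (k : R) F t DF : is_vderive F t DF ->
  is_derive (fun s => k / 2 * dot (F s) (F s)) t (k * dot (F t) DF).
Proof.
  intros (?&?&?); unfold dot.
  eapply is_derive_eq; [repeat derive_step | cbv beta; field].
Qed.

Lemma is_derive_div_vnorm_line mu x w : x <> vzero ->
  is_derive (fun s => mu / vnorm (vadd x (vscale s w))) 0 (- (mu * dot x w / vnorm x ^ 3)).
Proof.
  intros Hx. pose proof (dot_self_gt0 x Hx) as Hs.
  destruct x as [x1 x2 x3], w as [w1 w2 w3]; unfold vnorm, dot, vadd, vscale in *; simpl in *.
  assert (Hr : 0 < sqrt (x1 * x1 + x2 * x2 + x3 * x3)) by (apply sqrt_lt_R0; lra).
  auto_derive; rewrite ?Rmult_0_l, ?Rplus_0_r.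
  - split; [lra|split; [lra|trivial]].
  - field; lra.
Qed.

Section Gradients.

Variables (mu k1 k2 : R) (L0 A0 : vec3).

Lemma is_derive_Vfun (X Y : R -> vec3) (t dN : R) (DX DY : vec3) :
  is_vderive X t DX -> is_vderive Y t DY ->
  is_derive (fun s => mu / vnorm (X s)) t dN ->
  is_derive (fun s => Vfun mu k1 k2 L0 A0 (X s) (Y s)) t
    (k1 * dot (vsub (Lvec (X t) (Y t)) L0) (vadd (cross DX (Y t)) (cross (X t) DY))
     + k2 * dot (vsub (Avec mu (X t) (Y t)) A0)
         (vsub (vadd (cross DY (cross (X t) (Y t)))
                     (cross (Y t) (vadd (cross DX (Y t)) (cross (X t) DY))))
               (vadd (vscale dN (X t)) (vscale (mu / vnorm (X t)) DX)))).
Proof.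
  intros HX HY HN.
  eapply is_derive_ext; [intro s; symmetry; apply Vfun_dot|].
  unfold Lvec, Avec.
  eapply is_derive_eq.
  { apply is_derive_plus_R;
      match goal with |- is_derive (fun s => ?k / 2 * dot (@?F s) _) _ _ =>
        apply (is_derive_half_sq k F) end;
      repeat match goal with
      | |- is_vderive (fun _ => ?a) _ _ => apply is_vderive_const
      | |- is_vderive (fun s => vsub (@?F s) (@?G s)) _ _ => apply (is_vderive_sub F G)
      | |- is_vderive (fun s => cross (@?F s) (@?G s)) _ _ => apply (is_vderive_cross F G)
      | |- is_vderive (fun s => vscale (@?f s) (@?F s)) _ _ => apply (is_vderive_scale f F)
      | |- _ => eassumption
      end. }
  rewrite !vsub_vzero; reflexivity.
Qed.

Lemma gradx_V_spec x v w : x <> vzero ->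
  derivable_pt_lim (fun t => Vfun mu k1 k2 L0 A0 (vadd x (vscale t w)) v) 0
                   (dot (gradx_V mu k1 k2 L0 A0 x v) w).
Proof.
  intros Hx. apply is_derive_Reals.
  eapply is_derive_eq.
  { apply (is_derive_Vfun (fun s => vadd x (vscale s w)) (fun _ => v)).
    - apply is_vderive_line.
    - apply is_vderive_const.
    - apply is_derive_div_vnorm_line, Hx. }
  rewrite !line_at_0; unfold gradx_V; cbv zeta.
  generalize (vsub (Lvec x v) L0) (vsub (Avec mu x v) A0) (mu / vnorm x); intros dL dA n.
  replace (mu * dot x w / vnorm x ^ 3) with (mu / vnorm x ^ 3 * dot x w) by (unfold Rdiv; ring).
  generalize (mu / vnorm x ^ 3); intro q.
  destruct x, v, w, dL, dA; unfold vsub, vadd, vopp, vscale, cross, dot, vzero; simpl; ring.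
Qed.

Lemma gradv_V_spec x v w : x <> vzero ->
  derivable_pt_lim (fun t => Vfun mu k1 k2 L0 A0 x (vadd v (vscale t w))) 0
                   (dot (gradv_V mu k1 k2 L0 A0 x v) w).
Proof.
  intros Hx. apply is_derive_Reals.
  eapply is_derive_eq.
  { apply (is_derive_Vfun (fun _ => x) (fun s => vadd v (vscale s w))).
    - apply is_vderive_const.
    - apply is_vderive_line.
    - apply is_derive_const_R. }
  rewrite !line_at_0; unfold gradv_V; cbv zeta.
  generalize (vsub (Lvec x v) L0) (vsub (Avec mu x v) A0) (mu / vnorm x); intros dL dA n.
  destruct x, v, w, dL, dA; unfold vsub, vadd, vopp, vscale, cross, dot, vzero; simpl; ring.
Qed.

Lemma gradV_dot_kepler_field x v : x <> vzero ->
  dot (gradx_V mu k1 k2 L0 A0 x v) v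
  + dot (gradv_V mu k1 k2 L0 A0 x v) (vscale (- (mu / (vnorm x ^ 3))) x) = 0.
Proof.
  intros Hx.
  assert (Hq : mu / vnorm x ^ 3 * dot x x = mu / vnorm x).
  { rewrite <- vnorm_sq. pose proof (vnorm_gt0 x Hx). field. lra. }
  unfold gradx_V, gradv_V; cbv zeta.
  generalize (vsub (Lvec x v) L0) (vsub (Avec mu x v) A0); intros dL dA.
  transitivity (k2 * dot dA v * (mu / vnorm x ^ 3 * dot x x - mu / vnorm x)).
  - generalize (mu / vnorm x ^ 3) (mu / vnorm x); intros q n; clear Hq Hx.
    destruct x, v, dL, dA; unfold vsub, vadd, vopp, vscale, cross, dot; simpl; ring.
  - rewrite Hq; ring.
Qed.

End Gradients.

(** * Bounds on sublevel sets *)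

Lemma dot_Avec mu x v : x <> vzero ->
  dot x (Avec mu x v) = vnorm (Lvec x v) ^ 2 - mu * vnorm x.
Proof.
  intros Hx; pose proof (vnorm_gt0 x Hx).
  rewrite vnorm_sq; unfold Avec, Lvec.
  transitivity (dot (cross x v) (cross x v) - mu / vnorm x * dot x x).
  - generalize (mu / vnorm x); intro s.
    destruct x, v; unfold dot, cross, vsub, vadd, vopp, vscale; simpl; ring.
  - rewrite <- (vnorm_sq x); field; lra.
Qed.

Lemma cross_Lvec mu x v :
  cross v (Lvec x v) = vadd (Avec mu x v) (vscale (mu / vnorm x) x).
Proof.
  unfold Avec, Lvec; generalize (mu / vnorm x); intro s.
  destruct x, v; unfold vsub, vadd, vopp, vscale, cross; simpl; f_equal; ring.
Qed.

Lemma dot_Lvec_r x v : dot v (Lvec x v) = 0.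
Proof. destruct x, v; unfold dot, Lvec, cross; simpl; ring. Qed.

Lemma kepler_bounds mu x v ell Lam alpha : 0 < mu -> x <> vzero ->
  0 < ell -> ell <= vnorm (Lvec x v) <= Lam -> vnorm (Avec mu x v) <= alpha < mu ->
  ell ^ 2 <= (mu + alpha) * vnorm x /\ (mu - alpha) * vnorm x <= Lam ^ 2 /\
  ell * vnorm v <= mu + alpha.
Proof.
  intros Hmu Hx Hell HL HA.
  pose proof (vnorm_gt0 x Hx) as Hr; pose proof (vnorm_ge0 v) as Hv.
  pose proof (dot_Avec mu x v Hx) as Hid.
  pose proof (dot_le_vnorm x (Avec mu x v)); pose proof (dot_ge_opp_vnorm x (Avec mu x v)).
  assert (HxA : vnorm x * vnorm (Avec mu x v) <= vnorm x * alpha)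
    by (apply Rmult_le_compat_l; lra).
  assert (HvL : vnorm v * vnorm (Lvec x v) <= mu + alpha).
  { rewrite <- vnorm_cross_orth by apply dot_Lvec_r.
    rewrite (cross_Lvec mu).
    eapply Rle_trans; [apply vnorm_add_le|].
    rewrite vnorm_scale, Rabs_right by (apply Rle_ge, Rlt_le, Rdiv_lt_0_compat; lra).
    replace (mu / vnorm x * vnorm x) with mu by (field; lra).
    lra. }
  split; [|split]; nra.
Qed.

Lemma le_sqrt_of_half_sq k a c : 0 < k -> 0 <= a -> k / 2 * a ^ 2 <= c ->
  a <= sqrt (2 * c / k).
Proof.
  intros Hk Ha H.
  assert (E : a ^ 2 <= 2 * c / k).
  { apply (Rle_div_r (a ^ 2)); nra. }
  apply le_of_sq_le; [|apply sqrt_pos].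
  rewrite pow2_sqrt; nra.
Qed.

Lemma sqrt_lt_of_lt_half_sq k b c : 0 < k -> 0 <= b -> 0 <= c -> c < k * b ^ 2 / 2 ->
  sqrt (2 * c / k) < b.
Proof.
  intros Hk Hb Hc H.
  rewrite <- (sqrt_pow2 b Hb); apply sqrt_lt_1_alt; split.
  - apply Rdiv_le_0_compat; lra.
  - apply (Rlt_div_l (2 * c)); nra.
Qed.

Lemma sublevel_bounds mu k1 k2 L0 A0 c :
  0 < mu -> 0 < k1 -> 0 < k2 -> vnorm A0 < mu -> 0 < c ->
  c < Rmin (k1 * vnorm L0 ^ 2 / 2) (k2 * (mu - vnorm A0) ^ 2 / 2) ->
  exists rho M, 0 < rho /\ forall x v, x <> vzero -> Vfun mu k1 k2 L0 A0 x v <= c ->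
    rho <= vnorm x /\ vnorm x <= M /\ vnorm v <= M.
Proof.
  intros Hmu Hk1 Hk2 HA0 Hc Hcm.
  pose proof (Rmin_l (k1 * vnorm L0 ^ 2 / 2) (k2 * (mu - vnorm A0) ^ 2 / 2)).
  pose proof (Rmin_r (k1 * vnorm L0 ^ 2 / 2) (k2 * (mu - vnorm A0) ^ 2 / 2)).
  set (dL := sqrt (2 * c / k1)); set (dA := sqrt (2 * c / k2)).
  assert (HdL : dL < vnorm L0) by (apply sqrt_lt_of_lt_half_sq; try apply vnorm_ge0; lra).
  assert (HdA : dA < mu - vnorm A0) by (apply sqrt_lt_of_lt_half_sq; lra).
  assert (0 <= dL) by apply sqrt_pos; assert (0 <= dA) by apply sqrt_pos.
  set (ell := vnorm L0 - dL); set (Lam := vnorm L0 + dL); set (alpha := vnorm A0 + dA).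
  assert (Hell : 0 < ell) by (unfold ell; lra).
  assert (Halpha : 0 <= alpha < mu) by (unfold alpha; pose proof (vnorm_ge0 A0); lra).
  exists (ell ^ 2 / (mu + alpha)), (Rmax (Lam ^ 2 / (mu - alpha)) ((mu + alpha) / ell)).
  split; [apply Rdiv_lt_0_compat; nra|].
  intros x v Hx HV; unfold Vfun in HV.
  set (L := Lvec x v) in *; set (A := Avec mu x v) in *.
  assert (HV' : k1 / 2 * vnorm (vsub L L0) ^ 2 <= c /\ k2 / 2 * vnorm (vsub A A0) ^ 2 <= c).
  { pose proof (pow2_ge_0 (vnorm (vsub L L0)));
      pose proof (pow2_ge_0 (vnorm (vsub A A0))); split; nra. }
  assert (HL : vnorm (vsub L L0) <= dL) by (apply le_sqrt_of_half_sq; try apply vnorm_ge0; tauto).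
  assert (HA : vnorm (vsub A A0) <= dA) by (apply le_sqrt_of_half_sq; try apply vnorm_ge0; tauto).
  assert (HLell : ell <= vnorm L <= Lam).
  { pose proof (vnorm_le_add_sub L0 L) as H0L; rewrite vnorm_subC in H0L.
    pose proof (vnorm_le_add_sub L L0); unfold ell, Lam; lra. }
  assert (HAalpha : vnorm A <= alpha < mu).
  { pose proof (vnorm_le_add_sub A A0); unfold alpha in *; lra. }
  destruct (kepler_bounds mu x v ell Lam alpha Hmu Hx Hell HLell HAalpha) as (Hlo & Hhi & Hv).
  pose proof (Rmax_l (Lam ^ 2 / (mu - alpha)) ((mu + alpha) / ell)).
  pose proof (Rmax_r (Lam ^ 2 / (mu - alpha)) ((mu + alpha) / ell)).
  split; [|split].
  - apply (Rle_div_l (ell ^ 2)); lra.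
  - enough (vnorm x <= Lam ^ 2 / (mu - alpha)) by lra. apply (Rle_div_r (vnorm x)); lra.
  - enough (vnorm v <= (mu + alpha) / ell) by lra. apply (Rle_div_r (vnorm v)); lra.
Qed.

(** * Continuity on phase space *)

Notation phase := (vec3 * vec3)%type.

Definition pdist_nbhd (p : phase) (P : phase -> Prop) : Prop :=
  exists d, 0 < d /\ forall q, pdist p q < d -> P q.

Global Instance pdist_nbhd_filter p : Filter (pdist_nbhd p).
Proof.
  constructor.
  - exists 1; split; [lra|auto].
  - intros P Q [d1 [H1 HP]] [d2 [H2 HQ]]; exists (Rmin d1 d2); split.
    + apply Rmin_glb_lt; auto.
    + intros q Hq; split; [apply HP|apply HQ];
        eapply Rlt_le_trans; eauto; [apply Rmin_l|apply Rmin_r].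
  - intros P Q HPQ [d [H HP]]; exists d; split; auto.
Qed.

Definition continuous6 (f : phase -> R) p := filterlim f (pdist_nbhd p) (locally (f p)).

Lemma continuous6_const a p : continuous6 (fun _ => a) p.
Proof. intros P HP; exists 1; split; [lra|]; intros; now apply locally_singleton. Qed.

Lemma continuous6_lipschitz g p : (forall q, Rabs (g q - g p) <= pdist p q) -> continuous6 g p.
Proof.
  intros Hg P [eps HP]; exists eps; split; [apply cond_pos|].
  intros q Hq; apply HP; change (Rabs (g q - g p) < eps).
  eapply Rle_lt_trans; eauto.
Qed.

Lemma continuous6_plus f g p : continuous6 f p -> continuous6 g p ->
  continuous6 (fun q => f q + g q) p.
Proof.
  intros Hf Hg; eapply (filterlim_comp_2 f g Rplus); [exact Hf|exact Hg|].
  exact (filterlim_plus (K := R_AbsRing) (f p) (g p)).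
Qed.

Lemma continuous6_mult f g p : continuous6 f p -> continuous6 g p ->
  continuous6 (fun q => f q * g q) p.
Proof.
  intros Hf Hg; eapply (filterlim_comp_2 f g Rmult); [exact Hf|exact Hg|].
  exact (filterlim_mult (K := R_AbsRing) (f p) (g p)).
Qed.

Lemma continuous6_opp f p : continuous6 f p -> continuous6 (fun q => - f q) p.
Proof.
  intros Hf; apply (filterlim_comp _ _ _ f Ropp _ (locally (f p))); auto.
  exact (filterlim_opp (K := R_AbsRing) (f p)).
Qed.

Lemma continuous6_minus f g p : continuous6 f p -> continuous6 g p ->
  continuous6 (fun q => f q - g q) p.
Proof. intros; apply continuous6_plus, continuous6_opp; auto. Qed.

Lemma continuous6_inv f p : continuous6 f p -> f p <> 0 -> continuous6 (fun q => / f q) p.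
Proof.
  intros Hf Hn; apply (filterlim_comp _ _ _ f Rinv _ (locally (f p))); auto.
  apply (filterlim_Rbar_inv (Finite (f p))); congruence.
Qed.

Lemma continuous6_sqrt f p : continuous6 f p -> continuous6 (fun q => sqrt (f q)) p.
Proof.
  intros Hf; apply (filterlim_comp _ _ _ f sqrt _ (locally (f p))); auto.
  apply continuous_sqrt.
Qed.

Definition vcontinuous6 (F : phase -> vec3) p :=
  continuous6 (fun q => Defs.c1 (F q)) p /\ continuous6 (fun q => Defs.c2 (F q)) p /\
  continuous6 (fun q => Defs.c3 (F q)) p.

Lemma vnorm_sub_fst_le_pdist p q : vnorm (vsub (fst p) (fst q)) <= pdist p q.
Proof. apply sqrt_le_1_alt; pose proof (dot_self_ge0 (vsub (snd p) (snd q))); lra. Qed.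

Lemma vnorm_sub_snd_le_pdist p q : vnorm (vsub (snd p) (snd q)) <= pdist p q.
Proof. apply sqrt_le_1_alt; pose proof (dot_self_ge0 (vsub (fst p) (fst q))); lra. Qed.

Lemma vcontinuous6_fst p : vcontinuous6 (@fst vec3 vec3) p.
Proof.
  split; [|split]; apply continuous6_lipschitz; intro q;
    destruct (abs_coord_sub_le_vnorm (fst q) (fst p)) as (?&?&?);
    pose proof (vnorm_sub_fst_le_pdist p q) as Hd; rewrite vnorm_subC in Hd; lra.
Qed.

Lemma vcontinuous6_snd p : vcontinuous6 (@snd vec3 vec3) p.
Proof.
  split; [|split]; apply continuous6_lipschitz; intro q;
    destruct (abs_coord_sub_le_vnorm (snd q) (snd p)) as (?&?&?);
    pose proof (vnorm_sub_snd_le_pdist p q) as Hd; rewrite vnorm_subC in Hd; lra.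
Qed.

Ltac continuity6 := repeat match goal with
| |- continuous6 (fun _ => ?a) _ => apply continuous6_const
| |- continuous6 (fun q => @?f q + @?g q) _ => apply continuous6_plus
| |- continuous6 (fun q => @?f q - @?g q) _ => apply continuous6_minus
| |- continuous6 (fun q => @?f q * @?g q) _ => apply continuous6_mult
| |- continuous6 (fun q => - @?f q) _ => apply continuous6_opp
| |- continuous6 (fun q => sqrt (@?f q)) _ => apply continuous6_sqrt
| H : vcontinuous6 _ _ |- _ => destruct H as (?&?&?)
| |- continuous6 _ _ => eassumption
end.

Lemma continuous6_vnorm F p : vcontinuous6 F p -> continuous6 (fun q => vnorm (F q)) p.
Proof. intros; unfold vnorm, dot; continuity6. Qed.

Lemma continuous6_Vfun mu k1 k2 L0 A0 p : fst p <> vzero ->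
  continuous6 (fun q => Vfun mu k1 k2 L0 A0 (fst q) (snd q)) p.
Proof.
  intros Hx.
  pose proof (vcontinuous6_fst p); pose proof (vcontinuous6_snd p).
  assert (Hn : continuous6 (fun q => mu / vnorm (fst q)) p).
  { apply continuous6_mult; [apply continuous6_const|].
    apply continuous6_inv; [apply continuous6_vnorm; auto|].
    pose proof (vnorm_gt0 _ Hx); lra. }
  unfold Vfun, Lvec, Avec, vnorm at 1 2, dot; simpl.
  continuity6.
Qed.

Lemma open6_not_sublevel mu k1 k2 L0 A0 c rho : 0 < k1 -> 0 < k2 -> 0 < rho ->
  (forall x v, x <> vzero -> Vfun mu k1 k2 L0 A0 x v <= c -> rho <= vnorm x) ->
  open6 (fun p => ~ (fst p <> vzero /\ 0 <= Vfun mu k1 k2 L0 A0 (fst p) (snd p) <= c)).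
Proof.
  intros Hk1 Hk2 Hrho0 Hrho p Hp.
  destruct (Rlt_or_le (vnorm (fst p)) rho) as [Hlt|Hge].
  - exists (rho - vnorm (fst p)); split; [lra|].
    intros q Hq [Hq1 Hq2].
    pose proof (Hrho _ _ Hq1 (proj2 Hq2)).
    pose proof (vnorm_le_add_sub (fst q) (fst p)) as Htri; rewrite vnorm_subC in Htri.
    pose proof (vnorm_sub_fst_le_pdist p q); lra.
  - assert (Hx : fst p <> vzero) by (intro E; rewrite E, vnorm_vzero in Hge; lra).
    assert (HV : c < Vfun mu k1 k2 L0 A0 (fst p) (snd p)).
    { apply Rnot_le_lt; intro HV; apply Hp; repeat split; auto; apply Vfun_ge0; auto. }
    destruct (continuous6_Vfun mu k1 k2 L0 A0 p Hx
                (fun y => Rabs (y - Vfun mu k1 k2 L0 A0 (fst p) (snd p)) <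
                          Vfun mu k1 k2 L0 A0 (fst p) (snd p) - c)) as [d [Hd Hball]].
    { assert (Heps : 0 < Vfun mu k1 k2 L0 A0 (fst p) (snd p) - c) by lra.
      exists (mkposreal _ Heps); auto. }
    exists d; split; auto; intros q Hq [_ [_ Hq2]].
    apply Hball, Rabs_def2 in Hq; lra.
Qed.

(** * Heine-Borel in phase space *)

Definition near3 (a b : vec3) (e : R) :=
  Rabs (Defs.c1 a - Defs.c1 b) < e /\ Rabs (Defs.c2 a - Defs.c2 b) < e /\
  Rabs (Defs.c3 a - Defs.c3 b) < e.

Definition near6 (p q : phase) (e : R) := near3 (fst p) (fst q) e /\ near3 (snd p) (snd q) e.

Lemma near3_sym a b e : near3 a b e -> near3 b a e.
Proof.
  unfold near3; rewrite !(Rabs_minus_sym (Defs.c1 b)), !(Rabs_minus_sym (Defs.c2 b)),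
    !(Rabs_minus_sym (Defs.c3 b)); auto.
Qed.

Lemma Rabs_sub_lt_trans x y z e1 e2 e :
  Rabs (x - y) < e1 -> Rabs (y - z) < e2 -> e1 + e2 <= e -> Rabs (x - z) < e.
Proof.
  intros; pose proof (Rabs_triang (x - y) (y - z)).
  replace (x - y + (y - z)) with (x - z) in * by ring; lra.
Qed.

Lemma near3_trans a b c e1 e2 e : near3 a b e1 -> near3 b c e2 -> e1 + e2 <= e -> near3 a c e.
Proof. intros (?&?&?) (?&?&?) He; split; [|split]; eapply Rabs_sub_lt_trans; eauto. Qed.

Lemma near3_refl a e : 0 < e -> near3 a a e.
Proof. intros; unfold near3; rewrite !Rminus_diag, Rabs_R0; auto. Qed.

Lemma near6_sym p q e : near6 p q e -> near6 q p e.
Proof. intros [? ?]; split; apply near3_sym; auto. Qed.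

Lemma near6_trans p q r e1 e2 e : near6 p q e1 -> near6 q r e2 -> e1 + e2 <= e -> near6 p r e.
Proof. intros [? ?] [? ?] ?; split; eapply near3_trans; eauto. Qed.

Lemma near6_refl p e : 0 < e -> near6 p p e.
Proof. intros; split; apply near3_refl; auto. Qed.

Lemma sq_lt_of_Rabs_lt x e : Rabs x < e -> x * x < e ^ 2.
Proof.
  intros Hx; pose proof (Rabs_pos x).
  replace (x * x) with (Rabs x * Rabs x) by (rewrite <- Rabs_mult; apply Rabs_pos_eq; nra).
  nra.
Qed.

Lemma near3_dot_lt a b e : near3 a b e -> dot (vsub a b) (vsub a b) < 3 * e ^ 2.
Proof.
  destruct a as [a1 a2 a3], b as [b1 b2 b3].
  unfold near3, dot, vsub, vadd, vopp, vscale; simpl; intros (H1 & H2 & H3).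
  apply sq_lt_of_Rabs_lt in H1, H2, H3.
  replace (a1 + -1 * b1) with (a1 - b1) by ring; replace (a2 + -1 * b2) with (a2 - b2) by ring;
    replace (a3 + -1 * b3) with (a3 - b3) by ring; lra.
Qed.

Lemma near6_pdist p q e : near6 p q e -> pdist p q < 3 * e.
Proof.
  intros [Hx Hv].
  assert (He : 0 < e)
    by (destruct Hx as [H _]; pose proof (Rabs_pos (Defs.c1 (fst p) - Defs.c1 (fst q))); lra).
  apply near3_dot_lt in Hx, Hv.
  unfold pdist; rewrite <- (sqrt_pow2 (3 * e)) by lra.
  apply sqrt_lt_1_alt; split; [|nra].
  pose proof (dot_self_ge0 (vsub (fst p) (fst q)));
    pose proof (dot_self_ge0 (vsub (snd p) (snd q))); lra.
Qed.

Lemma list_choice {A B : Type} (l : list A) (P : A -> Prop) (Q : A -> B -> Prop) :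
  (forall a, In a l -> P a -> exists b, Q a b) ->
  exists lb : list B, forall a, In a l -> P a -> exists b, In b lb /\ Q a b.
Proof.
  induction l as [|a l IH]; intros H.
  - exists nil; intros a [].
  - destruct IH as [lb Hlb]; [intros; apply H; [right|]; auto|].
    destruct (classic (P a)) as [Pa|nPa].
    + destruct (H a (or_introl eq_refl) Pa) as [b Hb].
      exists (b :: lb); intros a' [<-|Ha'] Pa'.
      * exists b; split; [left|]; auto.
      * destruct (Hlb a' Ha' Pa') as [b' [? ?]]; exists b'; split; [right|]; auto.
    + exists lb; intros a' [<-|Ha'] Pa'; [contradiction|auto].
Qed.

Lemma real_net (r h : R) : 0 < h ->
  exists l : list R, forall x, Rabs x < r -> exists g, In g l /\ Rabs (g - x) < h.
Proof.
  intros Hh.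
  destruct (INR_unbounded (2 * r / h)) as [n Hn].
  set (f := fun k => - r + INR k * h).
  assert (Hcover : forall m x, - r <= x <= - r + INR m * h ->
            exists g, In g (map f (seq 0 (S m))) /\ Rabs (g - x) < h).
  { induction m as [|m IH]; intros x Hx.
    - exists (f 0%nat); split; [left; auto|].
      unfold f; simpl in *; rewrite Rabs_left1; lra.
    - rewrite seq_S, map_app.
      destruct (Rle_or_lt x (- r + INR m * h)) as [Hle|Hlt].
      + destruct (IH x (conj (proj1 Hx) Hle)) as [g [Hg Hgx]].
        exists g; split; auto; apply in_or_app; left; auto.
      + exists (f (S m)); split; [apply in_or_app; right; left; auto|].
        unfold f; rewrite S_INR in *; rewrite Rabs_right; lra. }
  exists (map f (seq 0 (S n))); intros x Hx; apply Rabs_def2 in Hx.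
  apply Hcover; split; [lra|].
  enough (2 * r < INR n * h) by lra.
  apply (Rlt_div_l (2 * r)); lra.
Qed.

Definition origin6 : phase := (vzero, vzero).

Lemma vec3_net (r h : R) : 0 < h ->
  exists N : list vec3, forall a, near3 vzero a r -> exists g, In g N /\ near3 g a h.
Proof.
  intros Hh; destruct (real_net r h Hh) as [l Hl].
  exists (flat_map (fun x => flat_map (fun y => map (fun z => mk3 x y z) l) l) l).
  intros [a1 a2 a3]; unfold near3; simpl; rewrite !Rminus_0_l, !Rabs_Ropp.
  intros (H1 & H2 & H3).
  destruct (Hl _ H1) as [g1 [I1 N1]], (Hl _ H2) as [g2 [I2 N2]], (Hl _ H3) as [g3 [I3 N3]].
  exists (mk3 g1 g2 g3); split; [|simpl; auto].
  apply in_flat_map; exists g1; split; auto.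
  apply in_flat_map; exists g2; split; auto.
  apply in_map_iff; exists g3; split; auto.
Qed.

Lemma phase_net (r h : R) : 0 < h ->
  exists G : list phase, forall p, near6 origin6 p r -> exists g, In g G /\ near6 g p h.
Proof.
  intros Hh; destruct (vec3_net r h Hh) as [N HN].
  exists (list_prod N N); intros [x v] [Hx Hv].
  destruct (HN x Hx) as [gx [Ix Nx]], (HN v Hv) as [gv [Iv Nv]].
  exists (gx, gv); split; [apply in_prod; auto|split; auto].
Qed.

Definition toTn (p : phase) : Compactness.Tn 6 R :=
  (Defs.c1 (fst p), (Defs.c2 (fst p), (Defs.c3 (fst p),
   (Defs.c1 (snd p), (Defs.c2 (snd p), (Defs.c3 (snd p), tt)))))).

Definition ofTn (t : Compactness.Tn 6 R) : phase :=
  let '(a, (b, (c, (d, (e, (f, _)))))) := t in (mk3 a b c, mk3 d e f).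

Lemma close_n_near6 d p t : Compactness.close_n 6 d (toTn p) t -> near6 p (ofTn t) d.
Proof.
  destruct p as [[p1 p2 p3] [p4 p5 p6]], t as [t1 [t2 [t3 [t4 [t5 [t6 []]]]]]].
  unfold near6, near3; simpl; tauto.
Qed.

Lemma near6_origin_bounded_n r p :
  near6 origin6 p r -> Compactness.bounded_n 6 (toTn (mk3 (-r) (-r) (-r), mk3 (-r) (-r) (-r)))
                                               (toTn (mk3 r r r, mk3 r r r)) (toTn p).
Proof.
  destruct p as [[p1 p2 p3] [p4 p5 p6]].
  unfold near6, near3; simpl; rewrite !Rminus_0_l, !Rabs_Ropp.
  intros [(H1 & H2 & H3) (H4 & H5 & H6)].
  apply Rabs_def2 in H1, H2, H3, H4, H5, H6; repeat split; lra.
Qed.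

Lemma lebesgue_number (P : (phase -> Prop) -> Prop) r :
  (forall A B : phase -> Prop, (forall z, B z -> A z) -> P A -> P B) ->
  (forall t, exists eta, 0 < eta /\ P (fun z => near6 t z eta)) ->
  exists d, 0 < d /\ forall y, near6 origin6 y r -> P (fun z => near6 y z d).
Proof.
  intros Hmono Hgauge.
  assert (Heta : forall t, {eta : R | 0 < eta /\ P (fun z => near6 (ofTn t) z eta)})
    by (intro t; apply constructive_indefinite_description, Hgauge).
  assert (Hpos : forall t, 0 < proj1_sig (Heta t) / 2)
    by (intro t; destruct (proj2_sig (Heta t)); lra).
  destruct (Compactness.compactness_value 6
              (toTn (mk3 (-r) (-r) (-r), mk3 (-r) (-r) (-r))) (toTn (mk3 r r r, mk3 r r r))
              (fun t => mkposreal _ (Hpos t))) as [d Hd].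
  exists d; split; [apply cond_pos|]; intros y Hy.
  (* [compactness_value] only provides a doubly negated witness. *)
  apply NNPP; intro Hneg.
  apply (Hd _ (near6_origin_bounded_n r y Hy)); intros [t [_ [Hyt Hdle]]]; simpl in Hdle.
  apply Hneg; destruct (proj2_sig (Heta t)) as [_ HP].
  eapply Hmono; [|exact HP].
  intros z Hz; apply near6_trans with y (proj1_sig (Heta t) / 2) d;
    [apply near6_sym, close_n_near6, Hyt | exact Hz | lra].
Qed.

Lemma compact6_of_bounded_closed (S : phase -> Prop) M :
  (forall p, S p -> vnorm (fst p) <= M /\ vnorm (snd p) <= M) ->
  open6 (fun p => ~ S p) -> compact6 S.
Proof.
  intros Hb Hc I U HU Hcov.
  assert (HS : forall p, S p -> near6 origin6 p (M + 1)).
  { intros p Sp; destruct (Hb p Sp) as [Hx Hv].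
    destruct (abs_coord_sub_le_vnorm vzero (fst p)) as (?&?&?),
             (abs_coord_sub_le_vnorm vzero (snd p)) as (?&?&?).
    rewrite vnorm_subC, vsub_vzero in *; unfold near6, near3; simpl in *; repeat split; lra. }
  destruct (lebesgue_number
              (fun A => (exists i, forall z, A z -> U i z) \/ (forall z, A z -> ~ S z)) (M + 1))
    as [d [Hd Hleb]].
  - intros A B HBA [[i Hi]|Hi]; [left; exists i|right]; auto.
  - intro t; destruct (classic (S t)) as [St|nSt].
    + destruct (Hcov t St) as [i Hi]; destruct (HU i t Hi) as [eps [He HUe]].
      exists (eps / 3); split; [lra|]; left; exists i; intros z Hz.
      apply HUe; pose proof (near6_pdist _ _ _ Hz); lra.
    + destruct (Hc t nSt) as [eps [He Hne]].
      exists (eps / 3); split; [lra|]; right; intros z Hz.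
      apply Hne; pose proof (near6_pdist _ _ _ Hz); lra.
  - destruct (phase_net (M + 1) (d / 2)) as [G HG]; [lra|].
    destruct (list_choice G (fun g => exists y, S y /\ near6 g y (d / 2))
                (fun g i => forall z, near6 g z (d / 2) -> U i z)) as [l Hl].
    { intros g _ [y [Sy Hgy]].
      destruct (Hleb y (HS y Sy)) as [[i Hi]|Hi].
      - exists i; intros z Hz; apply Hi.
        apply near6_trans with g (d / 2) (d / 2); [apply near6_sym|..]; auto; lra.
      - exfalso; apply (Hi y); [apply near6_refl|]; auto. }
    exists l; intros p Sp.
    destruct (HG p (HS p Sp)) as [g [Hg Hgp]].
    destruct (Hl g Hg) as [i [Hi HUi]]; [exists p; auto|].
    exists i; auto.
Qed.

Theorem lemma6 (mu k1 k2 : R) (L0 A0 : vec3)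
  (Hmu : 0 < mu) (Hk1 : 0 < k1) (Hk2 : 0 < k2)
  (Hperp : dot L0 A0 = 0) (HL0 : L0 <> vzero) (HA0 : vnorm A0 < mu) :
  (forall x v : vec3, x <> vzero ->
     (forall w : vec3,
        derivable_pt_lim (fun t => Vfun mu k1 k2 L0 A0 (vadd x (vscale t w)) v) 0
                         (dot (gradx_V mu k1 k2 L0 A0 x v) w)) /\
     (forall w : vec3,
        derivable_pt_lim (fun t => Vfun mu k1 k2 L0 A0 x (vadd v (vscale t w))) 0
                         (dot (gradv_V mu k1 k2 L0 A0 x v) w)) /\
     dot (gradx_V mu k1 k2 L0 A0 x v) v
     + dot (gradv_V mu k1 k2 L0 A0 x v) (vscale (- (mu / (vnorm x ^ 3))) x) = 0) /\
  (forall c : R,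
     0 < c -> c < Rmin (k1 * vnorm L0 ^ 2 / 2) (k2 * (mu - vnorm A0) ^ 2 / 2) ->
     compact6 (fun p => fst p <> vzero /\
                        0 <= Vfun mu k1 k2 L0 A0 (fst p) (snd p) <= c)).
Proof.
  split.
  - intros x v Hx; repeat split; intros;
      [apply gradx_V_spec | apply gradv_V_spec | apply gradV_dot_kepler_field]; exact Hx.
  - intros c Hc Hcm.
    destruct (sublevel_bounds mu k1 k2 L0 A0 c Hmu Hk1 Hk2 HA0 Hc Hcm)
      as [rho [M [Hrho Hbounds]]].
    apply compact6_of_bounded_closed with M.
    + intros [x v] [Hx [_ HV]]; simpl; destruct (Hbounds x v Hx HV) as (_ & ? & ?); auto.
    + apply (open6_not_sublevel mu k1 k2 L0 A0 c rho); auto.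
      intros x v Hx HV; apply (Hbounds x v Hx HV).
Qed.
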